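(* Let $k \geq p \geq 1$ be integers, and let $x_1, \dots, x_k, y_1, \dots, y_k$ be non-negative real numbers such that $\prod_{i \in I} x_i \leq \prod_{i \in I} y_i$ for every subset $I$ of $\{1,\dots,k\}$ with $|I| = p$. Then $\prod_{i=1}^k x_i \leq \prod_{i=1}^k y_i$. *)

From mathcomp Require Import all_boot all_order all_algebra.
From mathcomp Require Import reals.

From mathcomp Require Import all_boot all_order all_algebra.
From mathcomp Require Import reals.
From mathcomp Require Import perm.
Import Order.TTheory GRing.Theory Num.Theory.
Local Open Scope ring_scope.

(* Multiply the hypothesis over all p-subsets I.  Each index i lies in the
   same number m of p-subsets (a transposition moving i to j permutes them),
   so both sides become the full products raised to the power m > 0, and
   taking m-th roots of non-negative reals preserves the inequality. *)

Section PSubsets.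

Variables (T : finType) (p : nat).

Definition psubsets_mem (i : T) : {set {set T}} := [set I : {set T} | (#|I| == p) && (i \in I)].

Lemma card_psubsets_mem_le (i j : T) : (#|psubsets_mem i| <= #|psubsets_mem j|)%N.
Proof.
pose swap (I : {set T}) := [set tperm i j x | x in I].
have swap_inj : injective swap by apply: imset_inj; apply: perm_inj.
rewrite -(card_imset _ swap_inj); apply: subset_leq_card; apply/subsetP => J.
case/imsetP => I; rewrite !inE => /andP[/eqP cardI iI] ->.
rewrite card_imset; last exact: perm_inj.
by rewrite cardI eqxx; apply/imsetP; exists i; rewrite ?tpermL.
Qed.

Lemma card_psubsets_mem_const (i j : T) : #|psubsets_mem i| = #|psubsets_mem j|.
Proof. by apply/eqP; rewrite eqn_leq !card_psubsets_mem_le. Qed.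

Lemma card_psubsets_mem_gt0 (i : T) :
  (0 < p <= #|T|)%N -> (0 < #|psubsets_mem i|)%N.
Proof.
case/andP=> p_gt0 p_le.
have : (0 < #|[set A : {set T} | #|A| == p]|)%N by rewrite card_draws bin_gt0.
case/card_gt0P=> A; rewrite inE => /eqP cardA.
have /card_gt0P[j jA] : (0 < #|A|)%N by rewrite cardA.
rewrite (card_psubsets_mem_const i j); apply/card_gt0P; exists A.
by rewrite inE cardA eqxx.
Qed.

Lemma prod_psubsets (R : comPzSemiRingType) (F : T -> R) (i0 : T) :
  \prod_(I : {set T} | #|I| == p) \prod_(i in I) F i
    = (\prod_i F i) ^+ #|psubsets_mem i0|.
Proof.
rewrite (exchange_big_dep predT) //= -prodrXl; apply: eq_bigr => i _.
rewrite (card_psubsets_mem_const i0 i) -prodr_const; apply: eq_bigl => I.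
by rewrite inE.
Qed.

Lemma ler_prod_of_psubsets (R : numDomainType) (x y : T -> R) :
  (0 < p <= #|T|)%N ->
  (forall i, 0 <= x i) -> (forall i, 0 <= y i) ->
  (forall I : {set T}, #|I| = p -> \prod_(i in I) x i <= \prod_(i in I) y i) ->
  \prod_i x i <= \prod_i y i.
Proof.
move=> p_range x_ge0 y_ge0 le_xy.
have /card_gt0P[i0 _] : (0 < #|T|)%N.
  by case/andP: p_range => p_gt0; apply: leq_trans.
have m_gt0 := card_psubsets_mem_gt0 i0 p_range.
rewrite -(ler_pXn2r m_gt0) ?nnegrE ?prodr_ge0 //.
rewrite -(prod_psubsets _ x i0) -(prod_psubsets _ y i0); apply: ler_prod => I /eqP cardI.
by rewrite prodr_ge0 ?le_xy.
Qed.

End PSubsets.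

Theorem lemma5p2 (R : realType) (k p : nat) (x y : 'I_k -> R) :
  (1 <= p)%N -> (p <= k)%N ->
  (forall i, 0 <= x i) -> (forall i, 0 <= y i) ->
  (forall I : {set 'I_k}, #|I| = p ->
     \prod_(i in I) x i <= \prod_(i in I) y i) ->
  \prod_(i < k) x i <= \prod_(i < k) y i.
Proof.
move=> p_gt0 p_le_k; apply: ler_prod_of_psubsets.
by rewrite p_gt0 card_ord.
Qed.
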